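(* Let $G$ be a finite group. The following are equivalent: (1) the set $\{\ker\chi : \chi\in\mathrm{Irr}(G),\ \chi(1)>1\}$ of kernels of the nonlinear irreducible characters of $G$ is totally ordered by inclusion; (2) for every normal subgroup $M$ of $G$ with $1\le M< G'$, either (a) $G'/M$ is not a chief factor of $G$ and $G/M$ has a unique minimal normal subgroup, or (b) $G'/M$ is a chief factor of $G$ and $G/M$ has at most two minimal normal subgroups.
   Context: All groups are finite. $\mathrm{Irr}(G)$ denotes the set of complex irreducible characters of $G$, $\ker\chi=\{g\in G:\chi(g)=\chi(1)\}$, and $G'$ is the derived subgroup. *)

From HB Require Import structures.
From mathcomp Require Import all_boot all_order all_algebra all_fingroup all_solvable all_field all_character.
Set Implicit Arguments. Unset Strict Implicit. Unset Printing Implicit Defensive.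

Definition min_normals (gT : finGroupType) (H : {set gT}) : {set {group gT}} :=
  [set A : {group gT} | minnormal A H && (A \subset H)].

From HB Require Import structures.
From mathcomp Require Import all_boot all_order all_algebra all_fingroup all_solvable all_field all_character.
Import GRing.Theory Num.Theory.
Set Implicit Arguments. Unset Strict Implicit. Unset Printing Implicit Defensive.

(* An irreducible character is nonlinear exactly when its kernel does not
   contain G'.  Irreducible kernels separate normal subgroups, and multiplying
   a nonlinear chi by a linear character (whose kernel contains G') lets a
   nonlinear kernel containing a normal subgroup A miss any N that is not
   contained in A G' :&: ker chi.  If the nonlinear kernels form a chain,
   no two normal subgroups are separated in both directions by them; in G/M
   this leaves a single minimal normal subgroup inside (G/M)', equal to (G/M)'
   as soon as some minimal normal subgroup lies outside it, and at most one
   outside it.  Conversely, for incomparable kernels of nonlinear chi, psi we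
   factor out M = ker chi :&: ker psi :&: G'.  Then G/M has two minimal normal
   subgroups, and a third one when G'/M is chief: otherwise both kernels are
   p-subgroups of the centre, which is cyclic because a twist of chi is
   faithful, so they would be comparable. *)

Section MinNormals.

Local Open Scope group_scope.

Variables (gT : finGroupType) (H : {group gT}).

Lemma min_normals_minnormal (N : {group gT}) : N \in min_normals H -> minnormal N H.
Proof. by rewrite inE => /andP[]. Qed.

Lemma min_normals_nt (N : {group gT}) : N \in min_normals H -> N :!=: 1.
Proof. by move/min_normals_minnormal/mingroupp/andP=> []. Qed.

Lemma min_normals_normal (N : {group gT}) : N \in min_normals H -> N <| H.
Proof. by rewrite inE /normal => /andP[/mingroupp/andP[_ ->] ->]. Qed.

Lemma minnormal_min_normals (N : {group gT}) :
  minnormal N H -> N \subset H -> N \in min_normals H.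
Proof. by rewrite inE => -> ->. Qed.

Lemma min_normals_exists (K : {group gT}) :
  K :!=: 1 -> K <| H -> exists2 N : {group gT}, N \in min_normals H & N \subset K.
Proof.
move=> ntK /andP[sKH nKH]; have [N minN sNK] := minnormal_exists ntK nKH.
by exists N; rewrite // minnormal_min_normals // (subset_trans sNK).
Qed.

Lemma minnormal_sub_normalI (N K : {group gT}) :
  minnormal N H -> K <| H -> K :&: N != 1 -> N \subset K.
Proof.
case/mingroupP=> /andP[_ nNH] minN nsKH ntKN.
rewrite -(minN (K :&: N)%G) ?subsetIl ?subsetIr //=.
by rewrite ntKN normsI // normal_norm.
Qed.

Lemma min_normals_sub_eq (N1 N2 : {group gT}) :
  N1 \in min_normals H -> N2 \in min_normals H -> N1 \subset N2 -> N1 = N2.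
Proof.
move=> minN1 minN2 sN12; apply/group_inj/eqP; rewrite eqEsubset sN12.
apply: minnormal_sub_normalI (min_normals_minnormal minN2) (min_normals_normal minN1) _.
by rewrite (setIidPl sN12) min_normals_nt.
Qed.

Lemma card_min_normals_gt1 (K1 K2 : {group gT}) :
  K1 <| H -> K2 <| H -> K1 :!=: 1 -> K2 :!=: 1 -> K1 :&: K2 = 1 ->
  (1 < #|min_normals H|)%N.
Proof.
move=> nsK1H nsK2H ntK1 ntK2 tiK12.
have [N1 minN1 sN1K1] := min_normals_exists ntK1 nsK1H.
have [N2 minN2 sN2K2] := min_normals_exists ntK2 nsK2H.
apply/card_gt1P; exists N1, N2; split=> //.
apply: contraTneq (min_normals_nt minN1) => eqN12.
by rewrite negbK -subG1 -tiK12 subsetI sN1K1 eqN12 sN2K2.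
Qed.

End MinNormals.

Section Separation.

Local Open Scope group_scope.
Local Open Scope ring_scope.

Variables (gT : finGroupType) (H : {group gT}).
Local Notation D := (H^`(1))%g.

Lemma irr1_gt1_der1 (i : Iirr H) :
  1 < 'chi[H]_i 1%g = ~~ (D \subset cfker 'chi[H]_i).
Proof.
rewrite -lin_irr_der1 qualifE /= /linear_char_pred irr_char /=.
have /natrP[n chi1] := Cnat_irr1 i.
have := irr1_gt0 i; rewrite chi1 ltr0n ltr1n pnatr_eq1.
by case: n {chi1} => [|[|n]].
Qed.

Lemma irr_cfker_separates (L : {group gT}) (X : {set gT}) :
  L <| H -> ~~ (X \subset L) ->
  exists i : Iirr H, (L \subset cfker 'chi[H]_i) && ~~ (X \subset cfker 'chi[H]_i).
Proof.
move=> nsLH nsubXL; apply/existsP; apply: contraR nsubXL => /existsPn noSep.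
rewrite -(cap_cfker_normal nsLH); apply/bigcapsP => i sLi.
by have := noSep i; rewrite sLi negbK.
Qed.

(* [k] indexes ['chi_l * 'chi_i]. *)
Lemma mul_lin_irr_cfker (i l : Iirr H) : D \subset cfker 'chi[H]_l ->
  exists k : Iirr H, 'chi[H]_k 1%g = 'chi[H]_i 1%g /\
    cfker 'chi[H]_i :&: cfker 'chi[H]_l = cfker 'chi[H]_i :&: cfker 'chi[H]_k.
Proof.
move=> sDl; have linl : 'chi[H]_l \is a linear_char by rewrite lin_irr_der1.
have /irrP[k chik] := mul_lin_irr linl (mem_irr i).
have chik1 : 'chi_k 1%g = 'chi_i 1%g by rewrite -chik cfunE lin_char1 // mul1r.
exists k; split => //; apply/eqP; rewrite eqEsubset !subsetI !subsetIl /=.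
rewrite -chik (setIC (cfker 'chi_i)) cfker_mul /=.
apply/subsetP => x /setIP[kerix]; rewrite chik !cfkerEirr !inE chik1 -chik cfunE.
rewrite (cfker1 kerix) (lin_char1 linl) -[X in _ == X]mul1r.
by move/eqP/(mulIf (irr1_neq0 i)) ->.
Qed.

Definition nonlinear_separates (X Y : {set gT}) :=
  exists j : Iirr H, [/\ ~~ (D \subset cfker 'chi[H]_j),
                        X \subset cfker 'chi[H]_j & ~~ (Y \subset cfker 'chi[H]_j)].

Lemma nonlinear_separates_sub_der1 (L : {group gT}) (X : {set gT}) :
  L <| H -> X \subset D -> ~~ (X \subset L) -> nonlinear_separates L X.
Proof.
move=> nsLH sXD /(irr_cfker_separates nsLH)[j /andP[sLj nsXj]].
by exists j; split=> //; apply: contra nsXj; apply: subset_trans.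
Qed.

Lemma nonlinear_separates_twist (A : {group gT}) (N : {set gT}) (i : Iirr H) :
  A <| H -> ~~ (D \subset cfker 'chi[H]_i) -> A \subset cfker 'chi[H]_i ->
  ~~ (N \subset (A <*> D) :&: cfker 'chi[H]_i) -> nonlinear_separates A N.
Proof.
move=> nsAH nsDi sAi /subsetPn[x Nx]; rewrite inE negb_and.
have [kerix|nkerix _] := boolP (x \in cfker 'chi_i); last first.
  by exists i; split=> //; apply/subsetPn; exists x.
rewrite /= orbF => nADx.
have nsADH : (A <*> D)%G <| H by rewrite normalY ?der_normal.
have [|l /andP[sADl nxl]] := @irr_cfker_separates _ [set x] nsADH; first by rewrite sub1set.
have [k [chik1 kerk]] := mul_lin_irr_cfker i (subset_trans (joing_subr A D) sADl).
exists k; split.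
- by rewrite -irr1_gt1_der1 chik1 irr1_gt1_der1.
- apply: subset_trans (subsetIr (cfker 'chi_i) _).
  by rewrite -kerk subsetI sAi (subset_trans (joing_subl A D)).
apply/subsetPn; exists x => //; apply: contra nxl => kerkx.
by rewrite sub1set; have /setIP[] : x \in cfker 'chi_i :&: cfker 'chi_l by rewrite kerk inE kerix.
Qed.

Lemma min_normals_separates (N1 N2 : {group gT}) :
  minnormal D H -> N1 \in min_normals H -> N2 \in min_normals H ->
  ~~ (N1 \subset D) -> N1 != N2 -> nonlinear_separates N1 N2.
Proof.
move=> minD minN1 minN2 nsN1D neN12; have nsN1H := min_normals_normal minN1.
have minD' : (H^`(1))%G \in min_normals H by rewrite minnormal_min_normals ?der_sub.
have nsDN1 : ~~ (D \subset N1).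
  by apply: contra nsN1D => sDN1; rewrite -(min_normals_sub_eq minD' minN1 sDN1).
have [i /andP[sN1i nsDi]] := irr_cfker_separates nsN1H nsDN1.
apply: (nonlinear_separates_twist nsN1H nsDi sN1i).
have Di1 : cfker 'chi_i :&: D = 1%g.
  by apply/eqP; apply: contraNT nsDi; apply: minnormal_sub_normalI minD (cfker_normal _).
have nDN1 : D \subset 'N(N1) := subset_trans (der_sub 1 H) (normal_norm nsN1H).
rewrite norm_joinEr // -(group_modl _ sN1i) setIC Di1 mulg1.
by apply: contra neN12 => sN2N1; rewrite (min_normals_sub_eq minN2 minN1 sN2N1).
Qed.

End Separation.

Definition nonlinear_kernels_chain (gT : finGroupType) (G : {group gT}) :=
  forall i j : Iirr G, (1 < 'chi[G]_i 1%g)%R -> (1 < 'chi[G]_j 1%g)%R ->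
    (cfker ('chi[G]_i)%R \subset cfker ('chi[G]_j)%R) ||
    (cfker ('chi[G]_j)%R \subset cfker ('chi[G]_i)%R).

Section Chain.

Local Open Scope group_scope.
Local Open Scope ring_scope.

Variables (gT : finGroupType) (H : {group gT}).
Local Notation D := (H^`(1))%g.
Hypothesis chainH : nonlinear_kernels_chain H.

Lemma chain_separates_asym (X Y : {set gT}) :
  nonlinear_separates H X Y -> ~ nonlinear_separates H Y X.
Proof.
move=> [i [nsDi sXi nsYi]] [j [nsDj sYj nsXj]].
have := @chainH i j; rewrite !irr1_gt1_der1 => /(_ nsDi nsDj) /orP[sij|sji].
- by case/negP: nsXj; apply: subset_trans sij.
- by case/negP: nsYi; apply: subset_trans sji.
Qed.

Lemma chain_min_normals_sub_der1_eq (N1 N2 : {group gT}) :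
  N1 \in min_normals H -> N2 \in min_normals H ->
  N1 \subset D -> N2 \subset D -> N1 = N2.
Proof.
move=> minN1 minN2 sN1D sN2D; apply/eqP/negPn/negP => neN12.
have nsN21 : ~~ (N2 \subset N1).
  by apply: contra neN12 => /(min_normals_sub_eq minN2 minN1) ->.
have nsN12 : ~~ (N1 \subset N2).
  by apply: contra neN12 => /(min_normals_sub_eq minN1 minN2) ->.
apply: (@chain_separates_asym N1 N2).
- exact: nonlinear_separates_sub_der1 (min_normals_normal minN1) sN2D nsN21.
- exact: nonlinear_separates_sub_der1 (min_normals_normal minN2) sN1D nsN12.
Qed.

Lemma chain_minnormal_der1 (A N : {group gT}) :
  A \in min_normals H -> A \subset D ->
  N \in min_normals H -> ~~ (N \subset D) -> minnormal D H.
Proof.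
move=> minA sAD minN nsND.
suff eqAD : A :=: D by rewrite -eqAD min_normals_minnormal.
apply/eqP; rewrite eqEsubset sAD /=; apply/negPn/negP => nsDA.
have nsAH := min_normals_normal minA.
have [i [nsDi sAi _]] := nonlinear_separates_sub_der1 nsAH (subxx D) nsDA.
apply: (@chain_separates_asym A N).
- apply: (nonlinear_separates_twist nsAH nsDi sAi).
  by rewrite (joing_idPr sAD); apply: contra nsND => /subset_trans; apply; apply: subsetIl.
- apply: (nonlinear_separates_sub_der1 (min_normals_normal minN) sAD).
  by apply: contra nsND => /(min_normals_sub_eq minA minN) <-.
Qed.

Lemma chain_min_normals_notsub_der1_eq (N1 N2 : {group gT}) :
  minnormal D H -> N1 \in min_normals H -> N2 \in min_normals H ->
  ~~ (N1 \subset D) -> ~~ (N2 \subset D) -> N1 = N2.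
Proof.
move=> minD minN1 minN2 nsN1D nsN2D; apply/eqP/negPn/negP => neN12.
apply: (@chain_separates_asym N1 N2); apply: min_normals_separates => //.
by rewrite eq_sym.
Qed.

Lemma chain_card_min_normals_eq1 :
  D != 1%g -> ~~ minnormal D H -> #|min_normals H| = 1%N.
Proof.
move=> ntD nminD.
have [A minA sAD] := min_normals_exists ntD (der_normal 1 H).
suff -> : min_normals H = [set A] by rewrite cards1.
apply/eqP; rewrite eqEsubset sub1set minA andbT; apply/subsetP => N minN.
rewrite inE; have [sND|nsND] := boolP (N \subset D).
  by rewrite (chain_min_normals_sub_der1_eq minN minA sND sAD).
by case/negP: nminD; apply: chain_minnormal_der1 minA sAD minN nsND.
Qed.

Lemma chain_card_min_normals_le2 : minnormal D H -> (#|min_normals H| <= 2)%N.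
Proof.
move=> minD; rewrite leqNgt; apply/card_gt2P.
move=> -[N1 [N2 [N3 [[minN1 minN2 minN3] [neN12 neN23 neN31]]]]].
have side (M1 M2 : {group gT}) : M1 \in min_normals H -> M2 \in min_normals H ->
    M1 != M2 -> (M1 \subset D) != (M2 \subset D).
  move=> minM1 minM2; apply: contra => /eqP sameD; apply/eqP.
  have [sM1D|nsM1D] := boolP (M1 \subset D).
  - by apply: chain_min_normals_sub_der1_eq; rewrite -?sameD.
  - by apply: chain_min_normals_notsub_der1_eq; rewrite -?sameD.
move: (side _ _ minN1 minN2 neN12) (side _ _ minN2 minN3 neN23).
move: (side _ _ minN3 minN1 neN31).
by case: (N1 \subset D); case: (N2 \subset D); case: (N3 \subset D).
Qed.

End Chain.

Section NoncomparableKernels.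

Local Open Scope group_scope.
Local Open Scope ring_scope.
Variables (gT : finGroupType) (H : {group gT}).
Local Notation D := (H^`(1))%g.

Lemma cyclic_pgroup_sub_total (Z K1 K2 : {group gT}) (p : nat) :
  cyclic Z -> K1 \subset Z -> K2 \subset Z ->
  p.-group K1 -> p.-group K2 -> (K1 \subset K2) || (K2 \subset K1).
Proof.
move=> cycZ sK1Z sK2Z pK1 pK2.
rewrite -(cardSg_cyclic cycZ sK1Z sK2Z) -(cardSg_cyclic cycZ sK2Z sK1Z).
rewrite (card_pgroup pK1) (card_pgroup pK2).
by case/orP: (leq_total (logn p #|K1|) (logn p #|K2|)) => /dvdn_exp2l->; rewrite ?orbT.
Qed.

Lemma sub_center_trivI_der1 (K : {group gT}) :
  K <| H -> K :&: D = 1%g -> K \subset 'Z(H).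
Proof.
move=> /andP[sKH nKH] tiKD; rewrite subsetI sKH /=; apply/commG1P/eqP.
by rewrite -subG1 -tiKD subsetI commg_subl nKH /= derg1 commgSS.
Qed.

Lemma pgroup_trivI_der1 (B K : {group gT}) :
  min_normals H \subset [set (H^`(1))%G; B] -> K <| H -> K :&: D = 1%g ->
  (#|B|).-group K.
Proof.
move=> mnDB nsKH tiKD; have sKZ := sub_center_trivI_der1 nsKH tiKD.
apply/pgroupP => q q_pr /(Cauchy q_pr)[x Kx ox].
have sXK : <[x]> \subset K by rewrite cycle_subG.
have ntX : <[x]> :!=: 1%g.
  by rewrite cycle_eq1; apply: contraTneq q_pr => x1; rewrite -ox x1 order1.
have nXH : H \subset 'N(<[x]>).
  by rewrite cents_norm // centsC (subset_trans sXK (subset_trans sKZ (subsetIr _ _))).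
have minX : <[x]>%G \in min_normals H.
  rewrite minnormal_min_normals ?(subset_trans sXK (normal_sub nsKH)) //.
  apply/mingroupP; split=> [|Y /andP[ntY _] sYX]; first by rewrite ntX.
  apply/eqP; rewrite eqEcard sYX /= -orderE ox.
  have ntYcard : #|Y| != 1%N by rewrite -trivg_card1.
  by have := cardSg sYX; rewrite -orderE ox => /(prime_nt_dvdP q_pr ntYcard) ->.
have := subsetP mnDB _ minX; rewrite !inE => /orP[/eqP eqXD|/eqP <-].
  have : x \in K :&: D by rewrite inE Kx -[D]/(gval (H^`(1))%G) -eqXD cycle_id.
  by rewrite tiKD inE -cycle_eq1 (negbTE ntX).
by rewrite /= -orderE ox.
Qed.

(* Twisting ['chi_i] by a linear character that moves [B] yields a faithful character. *)
Lemma cyclic_center_min_normals2 (B : {group gT}) (i : Iirr H) :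
  min_normals H \subset [set (H^`(1))%G; B] -> ~~ (D \subset cfker 'chi[H]_i) ->
  B \subset cfker 'chi[H]_i -> ~~ (B \subset D) -> cyclic 'Z(H).
Proof.
move=> mnDB nsDi sBi nsBD.
have [l /andP[sDl nsBl]] := irr_cfker_separates (der_normal 1 H) nsBD.
have [k [chik1 kerk]] := mul_lin_irr_cfker i sDl.
apply: (@irr_faithful_center _ _ k); rewrite cfaithfulE subG1.
apply: contraNT nsBl => ntk.
have [N minN sNk] := min_normals_exists ntk (cfker_normal 'chi_k).
have := subsetP mnDB _ minN; rewrite !inE => /orP[/eqP eqND|/eqP eqNB].
  have nsDk : ~~ (D \subset cfker 'chi_k) by rewrite -irr1_gt1_der1 chik1 irr1_gt1_der1.
  by case/negP: nsDk; rewrite -[D]/(gval (H^`(1))%G) -eqND.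
apply: subset_trans (subsetIr (cfker 'chi_i) _).
by rewrite kerk subsetI sBi -eqNB.
Qed.

Section Kernels.

Variables i j : Iirr H.
Hypotheses (nsDi : ~~ (D \subset cfker 'chi[H]_i)) (nsDj : ~~ (D \subset cfker 'chi[H]_j)).
Hypotheses (nsij : ~~ (cfker 'chi[H]_i \subset cfker 'chi[H]_j))
           (nsji : ~~ (cfker 'chi[H]_j \subset cfker 'chi[H]_i)).

Let ntker_i : cfker 'chi[H]_i != 1%g.
Proof. by apply: contra nsij => /eqP ->; apply: sub1G. Qed.

Let ntker_j : cfker 'chi[H]_j != 1%g.
Proof. by apply: contra nsji => /eqP ->; apply: sub1G. Qed.

Lemma noncomparable_card_min_normals_gt1 :
  cfker 'chi[H]_i :&: cfker 'chi[H]_j :&: D = 1%g -> (1 < #|min_normals H|)%N.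
Proof.
move=> tiKKD; have ntD : D != 1%g by apply: contra nsDi => /eqP ->; apply: sub1G.
have nsKD (k : Iirr H) : (cfker 'chi_k :&: D)%G <| H by rewrite normalI ?cfker_normal ?der_normal.
have [tiKiD|ntKiD] := eqVneq (cfker 'chi_i :&: D) 1%g.
  exact: card_min_normals_gt1 (cfker_normal _) (der_normal 1 H) ntker_i ntD tiKiD.
have [tiKjD|ntKjD] := eqVneq (cfker 'chi_j :&: D) 1%g.
  exact: card_min_normals_gt1 (cfker_normal _) (der_normal 1 H) ntker_j ntD tiKjD.
apply: card_min_normals_gt1 (nsKD i) (nsKD j) ntKiD ntKjD _.
by rewrite /= setIACA setIid.
Qed.

Lemma noncomparable_card_min_normals_gt2 : minnormal D H -> (2 < #|min_normals H|)%N.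
Proof.
move=> minD; rewrite ltnNge; apply/negP => mn_le2.
have tiKD (k : Iirr H) : ~~ (D \subset cfker 'chi_k) -> cfker 'chi_k :&: D = 1%g.
  by move=> nsDk; apply/eqP; apply: contraNT nsDk; apply: minnormal_sub_normalI minD (cfker_normal _).
have [B minB sBi] := min_normals_exists ntker_i (cfker_normal 'chi_i).
have nsBD : ~~ (B \subset D).
  apply: contra (min_normals_nt minB) => sBD.
  by rewrite -subG1 -(tiKD i nsDi) subsetI sBi.
have mnDB : min_normals H \subset [set (H^`(1))%G; B].
  have neDB : (H^`(1))%G != B by apply: contraNneq nsBD => <-.
  have minD' : (H^`(1))%G \in min_normals H by rewrite minnormal_min_normals ?der_sub.
  have sDBmn : [set (H^`(1))%G; B] \subset min_normals H.
    by apply/subsetP => N /set2P[]->.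
  suff -> : min_normals H = [set (H^`(1))%G; B] by apply: subxx.
  by apply/esym/eqP; rewrite eqEcard sDBmn cards2 neDB.
have cycZ := cyclic_center_min_normals2 mnDB nsDi sBi nsBD.
have sKZ (k : Iirr H) (nsDk : ~~ (D \subset cfker 'chi_k)) :=
  sub_center_trivI_der1 (cfker_normal 'chi_k) (tiKD k nsDk).
have pK (k : Iirr H) (nsDk : ~~ (D \subset cfker 'chi_k)) :=
  pgroup_trivI_der1 mnDB (cfker_normal 'chi_k) (tiKD k nsDk).
have := cyclic_pgroup_sub_total cycZ (sKZ i nsDi) (sKZ j nsDj) (pK i nsDi) (pK j nsDj).
by rewrite (negbTE nsij) (negbTE nsji).
Qed.

End Kernels.

End NoncomparableKernels.

Section Quotient.

Local Open Scope ring_scope.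
Local Open Scope group_scope.
Variables (gT : finGroupType) (G M : {group gT}).
Hypothesis nsMG : M <| G.

Lemma chief_factor_der1E :
  M \subset G^`(1) -> chief_factor G M G^`(1) = minnormal (G / M)^`(1) (G / M).
Proof.
move=> sMD; have nMG := normal_norm nsMG.
have nsMD : M <| G^`(1) := normalS sMD (der_sub 1 G) nsMG.
rewrite -quotient_der //; apply/idP/idP => [/chief_factor_minnormal //|minDM].
by rewrite /chief_factor der_normal andbT; apply: minnormal_maxnormal.
Qed.

Lemma nonlinear_kernels_chain_quotient :
  nonlinear_kernels_chain G -> nonlinear_kernels_chain (G / M).
Proof.
move=> chainG i j gt1i gt1j.
have kerE (k : Iirr (G / M)) : cfker 'chi_k = cfker 'chi_(mod_Iirr k) / M.
  by rewrite mod_IirrE // (@quotient_cfker_mod _ _ set0).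
have := @chainG (mod_Iirr i) (mod_Iirr j); rewrite !mod_IirrE // !cfMod1.
by move=> /(_ gt1i gt1j) /orP[] /(quotientS M); rewrite -!mod_IirrE // -!kerE => ->; rewrite ?orbT.
Qed.

Lemma noncomparable_card_min_normals_quotient (i j : Iirr G) :
  M \subset cfker 'chi_i :&: cfker 'chi_j ->
  cfker 'chi_i :&: cfker 'chi_j :&: G^`(1) \subset M ->
  ~~ (G^`(1) \subset cfker 'chi_i) -> ~~ (G^`(1) \subset cfker 'chi_j) ->
  ~~ (cfker 'chi_i \subset cfker 'chi_j) -> ~~ (cfker 'chi_j \subset cfker 'chi_i) ->
  (1 < #|min_normals (G / M)|)%N /\
  (minnormal (G / M)^`(1) (G / M) -> (2 < #|min_normals (G / M)|)%N).
Proof.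
move=> sMij sIM nsDi nsDj nsij nsji; have nMG := normal_norm nsMG.
have [sMi sMj] : M \subset cfker 'chi_i /\ M \subset cfker 'chi_j.
  by apply/andP; rewrite -subsetI.
have nKM (k : Iirr G) : cfker 'chi_k \subset 'N(M) := subset_trans (cfker_sub _) nMG.
have nDM : G^`(1) \subset 'N(M) := subset_trans (der_sub 1 G) nMG.
have kerE (k : Iirr G) : M \subset cfker 'chi_k ->
    cfker 'chi_(quo_Iirr M k) = cfker 'chi_k / M.
  by move=> sMk; rewrite quo_IirrE // cfker_quo.
have nsDq (k : Iirr G) : M \subset cfker 'chi_k -> ~~ (G^`(1) \subset cfker 'chi_k) ->
    ~~ ((G / M)^`(1) \subset cfker 'chi_(quo_Iirr M k)).
  by move=> sMk; rewrite kerE // -quotient_der // quotientSGK.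
have nsKq (k l : Iirr G) : M \subset cfker 'chi_k -> M \subset cfker 'chi_l ->
    ~~ (cfker 'chi_k \subset cfker 'chi_l) ->
    ~~ (cfker 'chi_(quo_Iirr M k) \subset cfker 'chi_(quo_Iirr M l)).
  by move=> sMk sMl; rewrite !kerE // quotientSGK.
have tiq : cfker 'chi_(quo_Iirr M i) :&: cfker 'chi_(quo_Iirr M j) :&: (G / M)^`(1) = 1.
  rewrite !kerE // -quotient_der // -quotientGI // -quotientGI; last by rewrite subsetI sMi sMj.
  by apply/trivgP; rewrite quotient_sub1 // subIset ?nDM ?orbT.
split.
- exact: noncomparable_card_min_normals_gt1 (nsDq i sMi nsDi)
    (nsKq i j sMi sMj nsij) (nsKq j i sMj sMi nsji) tiq.
- exact: noncomparable_card_min_normals_gt2 (nsDq i sMi nsDi) (nsDq j sMj nsDj)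
    (nsKq i j sMi sMj nsij) (nsKq j i sMj sMi nsji).
Qed.

End Quotient.

Theorem theorem1p2 (gT : finGroupType) (G : {group gT}) :
  (forall i j : Iirr G,
      (1 < 'chi[G]_i 1%g)%R -> (1 < 'chi[G]_j 1%g)%R ->
      (cfker ('chi[G]_i)%R \subset cfker ('chi[G]_j)%R) ||
      (cfker ('chi[G]_j)%R \subset cfker ('chi[G]_i)%R))
  <->
  (forall M : {group gT}, (M <| G)%g -> (M \proper G^`(1))%g ->
      (~~ chief_factor G M G^`(1)%g /\ #|min_normals (G / M)%g| = 1%N)
      \/ (chief_factor G M G^`(1)%g /\ (#|min_normals (G / M)%g| <= 2)%N)).
Proof.
split=> [chainG M nsMG ltMD | minnormalsG i j gt1i gt1j].
  have sMD := proper_sub ltMD.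
  have nsMD := normalS sMD (der_sub 1 G) nsMG.
  have ntD : ((G / M)^`(1) != 1)%g by rewrite -quotient_der ?normal_norm // quotient_neq1.
  have chainGM := nonlinear_kernels_chain_quotient nsMG chainG.
  rewrite chief_factor_der1E //.
  have [minD|nminD] := boolP (minnormal _ _); [right | left]; split=> //.
  - exact: chain_card_min_normals_le2.
  - exact: chain_card_min_normals_eq1.
apply/negPn/negP; rewrite negb_or => /andP[nsij nsji].
rewrite !irr1_gt1_der1 in gt1i gt1j.
pose M := (cfker ('chi_i)%R :&: cfker ('chi_j)%R :&: G^`(1))%G.
have nsMG : (M <| G)%g by rewrite /= !normalI ?cfker_normal ?der_normal.
have sMD : (M \subset G^`(1))%g by apply: subsetIr.
have ltMD : (M \proper G^`(1))%g.
  rewrite properE sMD /=; apply: contra gt1i => /subset_trans; apply.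
  by rewrite -setIA subsetIl.
have [gt1 gt2] := noncomparable_card_min_normals_quotient nsMG
  (subsetIl _ _) (subxx _) gt1i gt1j nsij nsji.
case: (minnormalsG M nsMG ltMD); rewrite chief_factor_der1E // => -[minD cardM].
  by rewrite cardM in gt1.
by have := leq_ltn_trans cardM (gt2 minD); rewrite ltnn.
Qed.
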